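(* Let $X$ be a locale with frame presentation $\mathcal{O}X=\langle G\mid R\rangle$ and let $\overline{q}\colon\mathcal{O}(\Sigma^G)\twoheadrightarrow\mathcal{O}X$ be the quotient frame homomorphism. Equip $\mathcal{O}(\Sigma^G)$ with its Scott topology. Then the quotient topology on the set $\mathcal{O}X$ induced by the surjection $\overline{q}$ is exactly the Scott topology on $\mathcal{O}X$; that is, a subset $U\subseteq\mathcal{O}X$ is Scott-open if and only if $\overline{q}^{-1}(U)$ is Scott-open in $\mathcal{O}(\Sigma^G)$.
   Context: A frame is a complete lattice in which finite meets distribute over arbitrary joins. For a set $G$, $\mathcal{O}(\Sigma^G)$ denotes the free frame on $G$. A presentation $\mathcal{O}X=\langle G\mid R\rangle$ means $\mathcal{O}X$ is the quotient of the free frame on $G$ by the frame congruence generated by $R$; $\overline{q}$ is the corresponding surjective frame homomorphism. For a poset $L$ with directed joins, a subset $V\subseteq L$ is Scott-open if it is upward closed and whenever the join of a directed set $D$ lies in $V$, some $d\in D$ lies in $V$ (a set is directed if every finite subset has an upper bound in it). *)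

From Stdlib Require Import List.

Record Frame := {
  carrier :> Type;
  le : carrier -> carrier -> Prop;
  le_refl : forall x, le x x;
  le_trans : forall x y z, le x y -> le y z -> le x z;
  le_antisym : forall x y, le x y -> le y x -> x = y;
  join : (carrier -> Prop) -> carrier;
  join_ub : forall (S : carrier -> Prop) x, S x -> le x (join S);
  join_least : forall (S : carrier -> Prop) y,
      (forall x, S x -> le x y) -> le (join S) y;
  meet : carrier -> carrier -> carrier;
  meet_lb1 : forall x y, le (meet x y) x;
  meet_lb2 : forall x y, le (meet x y) y;
  meet_glb : forall x y z, le z x -> le z y -> le z (meet x y);
  top : carrier;
  top_max : forall x, le x top;
  meet_join_distr : forall (a : carrier) (S : carrier -> Prop),
      meet a (join S) = join (fun y => exists x, S x /\ y = meet a x)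
}.

Arguments le {f} _ _.
Arguments join {f} _.
Arguments meet {f} _ _.
Arguments top {f}.

Definition fjoin {L : Frame} {I : Type} (f : I -> L) : L :=
  join (fun y => exists i, y = f i).

Definition frame_hom {L M : Frame} (h : L -> M) : Prop :=
  h top = top /\
  (forall x y, h (meet x y) = meet (h x) (h y)) /\
  (forall S : L -> Prop, h (join S) = join (fun y => exists x, S x /\ y = h x)).

Definition is_free_frame (G : Type) (F : Frame) (eta : G -> F) : Prop :=
  forall (M : Frame) (f : G -> M),
    exists h : F -> M, frame_hom h /\ (forall g, h (eta g) = f g) /\
      (forall h' : F -> M, frame_hom h' -> (forall g, h' (eta g) = f g) ->
         forall x, h' x = h x).

Definition frame_congruence {L : Frame} (E : L -> L -> Prop) : Prop :=
  (forall x, E x x) /\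
  (forall x y, E x y -> E y x) /\
  (forall x y z, E x y -> E y z -> E x z) /\
  (forall a b c d, E a b -> E c d -> E (meet a c) (meet b d)) /\
  (forall (I : Type) (f g : I -> L), (forall i, E (f i) (g i)) ->
       E (fjoin f) (fjoin g)).

Definition gen_congruence {L : Frame} (R : L -> L -> Prop) (x y : L) : Prop :=
  forall E : L -> L -> Prop, frame_congruence E ->
    (forall a b, R a b -> E a b) -> E x y.

Definition directed {L : Frame} (D : L -> Prop) : Prop :=
  forall l : list L, (forall x, In x l -> D x) ->
    exists u, D u /\ forall x, In x l -> le x u.

Definition scott_open {L : Frame} (V : L -> Prop) : Prop :=
  (forall x y, V x -> le x y -> V y) /\
  (forall D : L -> Prop, directed D -> V (join D) -> exists d, D d /\ V d).

(* A join-preserving map is monotone and sends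
   directed sets to directed sets, which gives one direction.  Conversely,
   surjectivity lets every directed set [D] of [OX] be pulled back to the
   set [q^-1 D], which is again directed (an upper bound of finitely many of
   its elements is obtained by joining them with a preimage of an upper bound
   in [D]) and has [join D] as image of its join. *)
From Stdlib Require Import List.

Lemma map_lift {A B : Type} (P : A -> Prop) (f : A -> B) (l : list B) :
  (forall y, In y l -> exists x, P x /\ y = f x) ->
  exists l', (forall x, In x l' -> P x) /\ map f l' = l.
Proof.
  induction l as [|y l IH]; intros Hl.
  - exists nil. split; [intros x [] | reflexivity].
  - destruct (Hl y (or_introl eq_refl)) as [x [Px ->]].
    destruct IH as [l' [Hl' Hmap]].
    { intros z Hz. apply Hl. right. exact Hz. }
    exists (x :: l'). split.
    + intros z [<- | Hz]; auto.
    + simpl. rewrite Hmap. reflexivity.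
Qed.

Definition image {L M : Frame} (f : L -> M) (S : L -> Prop) : M -> Prop :=
  fun y => exists x, S x /\ y = f x.

Section JoinPreserving.
Variables (L M : Frame) (f : L -> M).
Hypothesis f_join : forall S : L -> Prop, f (join S) = join (image f S).

Lemma join_preserving_monotone (x y : L) : le x y -> le (f x) (f y).
Proof.
  intros Hxy.
  assert (Hjoin : join (fun z => z = x \/ z = y) = y).
  { apply le_antisym.
    - apply join_least. intros z [-> | ->]; [exact Hxy | apply le_refl].
    - apply join_ub. right. reflexivity. }
  rewrite <- Hjoin, f_join. apply join_ub. exists x. split; auto.
Qed.

Lemma directed_image (D : L -> Prop) : directed D -> directed (image f D).
Proof.
  intros HD l Hl.
  destruct (map_lift D f l Hl) as [l' [Hl' <-]].
  destruct (HD l' Hl') as [u [Du Hu]].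
  exists (f u). split.
  - exists u. split; auto.
  - intros y Hy. apply in_map_iff in Hy. destruct Hy as [x [<- Hx]].
    apply join_preserving_monotone, Hu, Hx.
Qed.

Lemma scott_open_preimage (U : M -> Prop) :
  scott_open U -> scott_open (fun x => U (f x)).
Proof.
  intros [Uup Udir]. split.
  - intros x y Ux Hxy. exact (Uup _ _ Ux (join_preserving_monotone x y Hxy)).
  - intros D HD UD. rewrite f_join in UD.
    destruct (Udir _ (directed_image D HD) UD) as [y [[x [Dx ->]] Ux]].
    exists x. split; assumption.
Qed.

Hypothesis f_surj : forall y : M, exists x : L, f x = y.

Lemma join_cons_image (w : L) (l : list L) :
  (forall x, In x l -> le (f x) (f w)) ->
  f (join (fun z => z = w \/ In z l)) = f w.
Proof.
  intros Hl. rewrite f_join. apply le_antisym.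
  - apply join_least. intros y [x [[-> | Hx] ->]]; [apply le_refl | auto].
  - apply join_ub. exists w. split; auto.
Qed.

Lemma directed_preimage (D : M -> Prop) :
  directed D -> directed (fun x => D (f x)).
Proof.
  intros HD l Hl.
  destruct (HD (map f l)) as [u [Du Hu]].
  { intros y Hy. apply in_map_iff in Hy. destruct Hy as [x [<- Hx]]. auto. }
  destruct (f_surj u) as [w <-].
  assert (Hbound : forall x, In x l -> le (f x) (f w))
    by (intros x Hx; apply Hu, in_map, Hx).
  exists (join (fun z => z = w \/ In z l)). split.
  - rewrite join_cons_image; assumption.
  - intros x Hx. apply join_ub. right. exact Hx.
Qed.

Lemma join_preimage (D : M -> Prop) : f (join (fun x => D (f x))) = join D.
Proof.
  rewrite f_join. apply le_antisym.
  - apply join_least. intros y [x [Dx ->]]. apply join_ub. exact Dx.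
  - apply join_least. intros y Dy. destruct (f_surj y) as [x <-].
    apply join_ub. exists x. split; auto.
Qed.

Lemma scott_open_of_preimage (U : M -> Prop) :
  scott_open (fun x => U (f x)) -> scott_open U.
Proof.
  intros [Uup Udir]. split.
  - intros y z Uy Hyz.
    destruct (f_surj y) as [a <-]. destruct (f_surj z) as [b <-].
    rewrite <- (join_cons_image b (a :: nil)).
    + apply (Uup a); [exact Uy |]. apply join_ub. right. left. reflexivity.
    + intros x [<- | []]. exact Hyz.
  - intros D HD UD.
    rewrite <- join_preimage in UD.
    destruct (Udir _ (directed_preimage D HD) UD) as [x [Dx Ux]].
    exists (f x). split; assumption.
Qed.

End JoinPreserving.

Theorem mainTheorem3 (G : Type) (F : Frame) (eta : G -> F)
  (Hfree : is_free_frame G F eta)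
  (R : F -> F -> Prop)
  (OX : Frame) (q : F -> OX)
  (Hhom : frame_hom q)
  (Hsurj : forall y : OX, exists x : F, q x = y)
  (Hker : forall x y : F, q x = q y <-> gen_congruence R x y) :
  forall U : OX -> Prop, scott_open U <-> scott_open (fun x : F => U (q x)).
Proof.
  destruct Hhom as [_ [_ q_join]].
  intros U. split.
  - apply scott_open_preimage. exact q_join.
  - apply scott_open_of_preimage; assumption.
Qed.
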